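(* Let $X\supseteq\omega_1$. Then $\mathrm{SRP}(X)$ holds if and only if for every projectively stationary $S\subseteq[X]^\omega$ there exists a continuous increasing function $f:\omega_1\to S$ with $\bigcup\mathrm{ran}(f)\supseteq\omega_1$.
   Context: For an uncountable set $Z$, a club on $[Z]^\omega$ is a set of the form $\{Y\in[Z]^\omega: f[Y^{<\omega}]\subseteq Y\}$ for some $f:Z^{<\omega}\to Z$ (clubs on $\mathcal P(Z)$ are defined the same way with all subsets), and a set is stationary iff it meets every club. A set $S\subseteq[X]^\omega$ is projectively stationary iff $\omega_1\subseteq X$, $S$ is stationary, and $\{A\cap\omega_1: A\in S\}$ contains a club on $[\omega_1]^\omega$. $S$ strongly reflects on $Z\subseteq X$ iff $S\cap[Z]^\omega$ contains a club on $[Z]^\omega$. $\mathrm{SRP}(X)$: every projectively stationary $S\subseteq[X]^\omega$ strongly reflects on some $Z$ with $\omega_1\subseteq Z\subseteq X$ and $|Z|=\omega_1$. A function $f$ from an ordinal into sets is increasing iff $\alpha<\beta$ implies $f(\alpha)\subseteq f(\beta)$, and continuous iff $f(\lambda)=\bigcup_{\alpha<\lambda}f(\alpha)$ for every limit $\lambda$ in its domain. *)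

From Stdlib Require Import List.
Import ListNotations.

(* Subsets of a type T are predicates T -> Prop. *)
Definition subset {T : Type} (A B : T -> Prop) : Prop := forall x, A x -> B x.

Definition countable {T : Type} (Y : T -> Prop) : Prop :=
  exists g : {y : T | Y y} -> nat, forall a b, g a = g b -> a = b.

Definition in_ctbl {T : Type} (Z Y : T -> Prop) : Prop := countable Y /\ subset Y Z.

(* f[Y^{<omega}] is a subset of Y (finite sequences = lists). *)
Definition closed_under {T : Type} (f : list T -> T) (Y : T -> Prop) : Prop :=
  forall s, Forall Y s -> Y (f s).

(* C is a club on [Z]^omega: C = {Y in [Z]^omega : f[Y^{<omega}] subset Y}
   for some f : Z^{<omega} -> Z. *)
Definition is_club_on {T : Type} (Z : T -> Prop) (C : (T -> Prop) -> Prop) : Prop :=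
  exists f : list T -> T,
    (forall s, Forall Z s -> Z (f s)) /\
    (forall Y, C Y <-> (in_ctbl Z Y /\ closed_under f Y)).

Definition stationary_on {T : Type} (Z : T -> Prop) (S : (T -> Prop) -> Prop) : Prop :=
  forall C, is_club_on Z C -> exists Y, C Y /\ S Y.

Definition contains_club_on {T : Type} (Z : T -> Prop) (S : (T -> Prop) -> Prop) : Prop :=
  exists C, is_club_on Z C /\ (forall Y, C Y -> S Y).

(* (W, lt) is (an isomorphic copy of) omega_1: a well-order, uncountable,
   all of whose proper initial segments are countable. *)
Definition is_omega1 (W : Type) (lt : W -> W -> Prop) : Prop :=
  well_founded lt /\
  (forall a b c, lt a b -> lt b c -> lt a c) /\
  (forall a b, lt a b \/ a = b \/ lt b a) /\
  ~ countable (fun _ : W => True) /\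
  (forall a, countable (fun b => lt b a)).

Definition is_limit {W : Type} (lt : W -> W -> Prop) (l : W) : Prop :=
  (exists a, lt a l) /\ (forall a, lt a l -> exists b, lt a b /\ lt b l).

(* omega_1 is included in X via iota : W -> X.  {A cap omega_1 : A in S},
   as subsets of W. *)
Definition trace {W X : Type} (iota : W -> X) (S : (X -> Prop) -> Prop)
  : (W -> Prop) -> Prop :=
  fun B => exists A, S A /\ (forall a, B a <-> A (iota a)).

Definition proj_stationary {W X : Type} (iota : W -> X) (S : (X -> Prop) -> Prop) : Prop :=
  stationary_on (fun _ : X => True) S /\
  contains_club_on (fun _ : W => True) (trace iota S).

Definition strongly_reflects {X : Type} (S : (X -> Prop) -> Prop) (Z : X -> Prop) : Prop :=
  contains_club_on Z (fun Y => S Y /\ in_ctbl Z Y).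

Definition card_eq_W (W : Type) {X : Type} (Z : X -> Prop) : Prop :=
  exists g : W -> {x : X | Z x},
    (forall a b, g a = g b -> a = b) /\ (forall z, exists a, g a = z).

Definition SRP {W X : Type} (iota : W -> X) : Prop :=
  forall S : (X -> Prop) -> Prop,
    (forall A, S A -> countable A) ->
    proj_stationary iota S ->
    exists Z : X -> Prop,
      (forall a, Z (iota a)) /\ card_eq_W W Z /\ strongly_reflects S Z.

Definition increasing {W X : Type} (lt : W -> W -> Prop) (f : W -> X -> Prop) : Prop :=
  forall a b, lt a b -> subset (f a) (f b).

Definition continuous {W X : Type} (lt : W -> W -> Prop) (f : W -> X -> Prop) : Prop :=
  forall l, is_limit lt l -> forall x, f l x <-> exists a, lt a l /\ f a x.

(* Forward: a witness Z of SRP carries a club [C] on [Z]^omega with [C ⊆ S];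
   closing the initial segments of omega_1 under the club function gives a
   continuous increasing omega_1-chain through C, hence through S.
   Backward: if f is such a chain, take Z := ⋃ ran f.  Z is an uncountable union
   of an increasing omega_1-chain of countable sets, so |Z| = omega_1.  Code into
   a single club function the requirements "with x also iota a for the least a
   with x ∈ f a" and "with iota a also f a, iota (a+1) and every iota b, b < a".  If Y is a
   countable set closed under it and d is least with iota d ∉ Y, then Y ∩ omega_1
   is exactly d, d is a limit, and Y = f d ∈ S by continuity. *)
From Stdlib Require Import List Arith Lia Relations Wellfounded Cantor.
From Stdlib Require Import Classical ClassicalEpsilon FunctionalExtensionality
  PropExtensionality ProofIrrelevance.
Import ListNotations.

Definition enumerable {T : Type} (A : T -> Prop) : Prop :=
  exists e : nat -> option T,
    (forall n y, e n = Some y -> A y) /\ (forall y, A y -> exists n, e n = Some y).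

Lemma countable_enumerable {T} (A : T -> Prop) : countable A -> enumerable A.
Proof.
  intros [k Hk].
  exists (fun n => match excluded_middle_informative (exists y, k y = n) with
     | left H => Some (proj1_sig (proj1_sig (constructive_indefinite_description _ H)))
     | right _ => None end).
  split.
  - intros n y. destruct excluded_middle_informative as [H|H]; [|discriminate].
    intros E; injection E as <-.
    exact (proj2_sig (proj1_sig (constructive_indefinite_description _ H))).
  - intros y Ay. exists (k (exist _ y Ay)).
    destruct excluded_middle_informative as [H|H]; [|exfalso; eauto].
    destruct (constructive_indefinite_description _ H) as [z Hz]; simpl.
    apply Hk in Hz. now rewrite Hz.
Qed.

Lemma enumerable_countable {T} (A : T -> Prop) : enumerable A -> countable A.
Proof.
  intros [e [_ He]].
  exists (fun y => proj1_sig (constructive_indefinite_description _ (He _ (proj2_sig y)))).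
  intros [a Ha] [b Hb]; simpl.
  destruct (constructive_indefinite_description _ (He a Ha)) as [n Hn].
  destruct (constructive_indefinite_description _ (He b Hb)) as [m Hm]; simpl.
  intros ->. rewrite Hn in Hm. injection Hm as ->. f_equal. apply proof_irrelevance.
Qed.

Lemma countable_injective_map {T U} (A : T -> Prop) (B : U -> Prop) (h : T -> U) :
  (forall x, A x -> B (h x)) -> (forall x y, A x -> A y -> h x = h y -> x = y) ->
  countable B -> countable A.
Proof.
  intros hAB h_inj [k Hk].
  exists (fun x => k (exist B (h (proj1_sig x)) (hAB _ (proj2_sig x)))).
  intros [x Ax] [y Ay] E. apply Hk in E. injection E as E.
  apply h_inj in E; auto. subst y. f_equal. apply proof_irrelevance.
Qed.

Lemma countable_subset {T} (A B : T -> Prop) :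
  (forall x, A x -> B x) -> countable B -> countable A.
Proof. intros hAB. apply countable_injective_map with (h := fun x => x); auto. Qed.

Lemma uncountable_inhabited {T} (A : T -> Prop) : ~ countable A -> exists x, A x.
Proof.
  intros HA. apply NNPP; intros Hn. apply HA. exists (fun _ => 0).
  intros [x Ax]. exfalso. eauto.
Qed.

Lemma countable_injection_nat {T} (A : T -> Prop) :
  countable A -> exists k : T -> nat, forall u v, A u -> A v -> k u = k v -> u = v.
Proof.
  intros [k Hk].
  exists (fun u => match excluded_middle_informative (A u) with
                   | left Au => k (exist _ u Au) | right _ => 0 end).
  intros u v Au Av.
  destruct excluded_middle_informative as [Au'|]; [|contradiction].
  destruct excluded_middle_informative as [Av'|]; [|contradiction].
  intros E. apply Hk in E. now injection E.
Qed.

Lemma enumerable_subset {T} (A B : T -> Prop) :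
  (forall x, B x -> A x) -> enumerable A -> enumerable B.
Proof.
  intros HBA HA. apply countable_enumerable.
  apply countable_subset with (B := A); [exact HBA|]. now apply enumerable_countable.
Qed.

Lemma enumerable_singleton {T} (y : T) : enumerable (fun x => x = y).
Proof.
  exists (fun _ => Some y). split.
  - intros n z E. now injection E.
  - intros z ->. now exists 0.
Qed.

Lemma enumerable_union {T} (A B : T -> Prop) :
  enumerable A -> enumerable B -> enumerable (fun x => A x \/ B x).
Proof.
  intros [e1 [H1 H1']] [e2 [H2 H2']].
  exists (fun n => let (i, m) := Cantor.of_nat n in
                   match i with 0 => e1 m | _ => e2 m end).
  split.
  - intros n y. destruct (Cantor.of_nat n) as [[|i] m]; eauto.
  - intros y [Ay|By].
    + destruct (H1' y Ay) as [n Hn]. exists (Cantor.to_nat (0, n)).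
      now rewrite Cantor.cancel_of_to.
    + destruct (H2' y By) as [n Hn]. exists (Cantor.to_nat (1, n)).
      now rewrite Cantor.cancel_of_to.
Qed.

Lemma enumerable_image {T U} (h : T -> U) (A : T -> Prop) :
  enumerable A -> enumerable (fun y => exists x, A x /\ y = h x).
Proof.
  intros [e [H1 H2]]. exists (fun n => option_map h (e n)). split.
  - intros n y. destruct (e n) eqn:E; simpl; [|discriminate].
    intros F; injection F as <-. eauto.
  - intros y [x [Ax ->]]. destruct (H2 x Ax) as [n Hn]. exists n. now rewrite Hn.
Qed.

Fixpoint decode_list {T} (e : nat -> option T) (len code : nat) : option (list T) :=
  match len with
  | 0 => Some []
  | S len' =>
      let (i, code') := Cantor.of_nat code in
      match e i, decode_list e len' code' with
      | Some x, Some s => Some (x :: s)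
      | _, _ => None
      end
  end.

Lemma enumerable_lists {T} (A : T -> Prop) : enumerable A -> enumerable (Forall A).
Proof.
  intros [e [H1 H2]].
  assert (decode_sound : forall len code s, decode_list e len code = Some s -> Forall A s).
  { induction len as [|len IH]; simpl; intros code s E.
    - injection E as <-; constructor.
    - destruct (Cantor.of_nat code) as [i code'].
      destruct (e i) eqn:Ei; [|discriminate].
      destruct (decode_list e len code') eqn:Es; [|discriminate].
      injection E as <-. constructor; eauto. }
  assert (decode_complete : forall s, Forall A s ->
            exists code, decode_list e (length s) code = Some s).
  { induction 1 as [|x s Ax _ [code Hcode]]; simpl.
    - now exists 0.
    - destruct (H2 x Ax) as [i Hi]. exists (Cantor.to_nat (i, code)).
      now rewrite Cantor.cancel_of_to, Hi, Hcode. }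
  exists (fun n => let (len, code) := Cantor.of_nat n in decode_list e len code).
  split.
  - intros n s. destruct (Cantor.of_nat n) as [len code]. apply decode_sound.
  - intros s Hs. destruct (decode_complete s Hs) as [code Hcode].
    exists (Cantor.to_nat (length s, code)). now rewrite Cantor.cancel_of_to.
Qed.

Lemma enumerable_countable_union {T} (A : nat -> T -> Prop) :
  (forall n, enumerable (A n)) -> enumerable (fun x => exists n, A n x).
Proof.
  intros HA.
  set (e := fun n => proj1_sig (constructive_indefinite_description _ (HA n))).
  assert (He : forall n, (forall m y, e n m = Some y -> A n y) /\
                         (forall y, A n y -> exists m, e n m = Some y)).
  { intro n. exact (proj2_sig (constructive_indefinite_description _ (HA n))). }
  exists (fun k => let (n, m) := Cantor.of_nat k in e n m). split.
  - intros k y. destruct (Cantor.of_nat k) as [n m]. intros F.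
    exists n. exact (proj1 (He n) m y F).
  - intros y [n Hn]. destruct (proj2 (He n) y Hn) as [m Hm].
    exists (Cantor.to_nat (n, m)). now rewrite Cantor.cancel_of_to.
Qed.

(** * Closure under a function on finite sequences *)

Lemma Forall_exists_directed {I T} (Q : I -> Prop) (P : I -> T -> Prop) :
  (exists i, Q i) ->
  (forall i j, Q i -> Q j ->
     exists k, Q k /\ (forall x, P i x -> P k x) /\ (forall x, P j x -> P k x)) ->
  forall s, Forall (fun x => exists i, Q i /\ P i x) s -> exists i, Q i /\ Forall (P i) s.
Proof.
  intros [i0 Qi0] directed s Hs.
  induction Hs as [|x s [i [Qi Pix]] _ [j [Qj Pjs]]]; [now exists i0|].
  destruct (directed i j Qi Qj) as [k [Qk [Hik Hjk]]].
  exists k. split; [exact Qk|]. constructor; [auto|].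
  eapply Forall_impl; [exact Hjk|exact Pjs].
Qed.

Section Closure.

Variables (T : Type) (g : list T -> T).

Fixpoint stage (A : T -> Prop) (n : nat) : T -> Prop :=
  match n with
  | 0 => A
  | S n' => fun x => stage A n' x \/ exists s, Forall (stage A n') s /\ x = g s
  end.

Definition closure (A : T -> Prop) (x : T) : Prop := exists n, stage A n x.

Lemma stage_le A n m x : n <= m -> stage A n x -> stage A m x.
Proof. induction 1; simpl; auto. Qed.

Lemma stage_subset (A B : T -> Prop) n x :
  (forall y, A y -> B y) -> stage A n x -> stage B n x.
Proof.
  intros HAB. revert x. induction n as [|n IH]; simpl; auto.
  intros x [Hx|[s [Hs ->]]]; [left; auto|right; exists s; split; auto].
  eapply Forall_impl; [exact IH|exact Hs].
Qed.

Lemma closure_subset (A B : T -> Prop) x :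
  (forall y, A y -> B y) -> closure A x -> closure B x.
Proof. intros HAB [n Hn]. exists n. exact (stage_subset A B n x HAB Hn). Qed.

Lemma closure_closed A : closed_under g (closure A).
Proof.
  intros s Hs.
  destruct (Forall_exists_directed (fun _ => True) (stage A)) with (s := s)
    as [n [_ Hn]].
  - now exists 0.
  - intros n m _ _. exists (max n m).
    split; [exact I|split; intros x; apply stage_le; lia].
  - eapply Forall_impl; [|exact Hs]. intros x [n Hx]. now exists n.
  - exists (S n). simpl. right. eauto.
Qed.

Lemma closure_min (A Z : T -> Prop) :
  (forall x, A x -> Z x) -> (forall s, Forall Z s -> Z (g s)) ->
  forall x, closure A x -> Z x.
Proof.
  intros HA Hg x [n Hn]. revert x Hn. induction n as [|n IH]; simpl; auto.
  intros x [Hx|[s [Hs ->]]]; auto.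
  apply Hg. eapply Forall_impl; [exact IH|exact Hs].
Qed.

Lemma enumerable_closure A : enumerable A -> enumerable (closure A).
Proof.
  intros HA. apply enumerable_countable_union.
  induction n as [|n IH]; simpl; auto.
  apply enumerable_union; [exact IH|].
  apply enumerable_image, enumerable_lists, IH.
Qed.

Lemma closure_increasing {W} (lt : W -> W -> Prop) (A : W -> T -> Prop) :
  increasing lt A -> increasing lt (fun a => closure (A a)).
Proof. intros HA a b Hab x. apply closure_subset, HA, Hab. Qed.

(* Closing under [g] commutes with directed unions: a finite sequence from the
   union already lies in a single member. *)
Lemma closure_continuous {W} (lt : W -> W -> Prop) (A : W -> T -> Prop) :
  (forall a b, lt a b \/ a = b \/ lt b a) ->
  increasing lt A -> continuous lt A -> continuous lt (fun a => closure (A a)).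
Proof.
  intros lt_total A_incr A_cont l Hl.
  assert (stage_below : forall n x, stage (A l) n x ->
                        exists a, lt a l /\ stage (A a) n x).
  { induction n as [|n IH]; simpl.
    - intros x Hx. exact (proj1 (A_cont l Hl x) Hx).
    - intros x [Hx|[s [Hs ->]]].
      + destruct (IH x Hx) as [a [Ha Hx']]. eauto.
      + destruct (Forall_exists_directed (fun a => lt a l) (fun a => stage (A a) n))
          with (s := s) as [a [Ha Hs']].
        * apply Hl.
        * intros a b Ha Hb.
          destruct (lt_total a b) as [Hab|[<-|Hba]].
          -- exists b. split; [exact Hb|split; [|auto]].
             intros x. apply stage_subset, A_incr, Hab.
          -- exists a. auto.
          -- exists a. split; [exact Ha|split; [auto|]].
             intros x. apply stage_subset, A_incr, Hba.
        * eapply Forall_impl; [exact IH|exact Hs].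
        * exists a. split; [exact Ha|]. right. eauto. }
  intros x. split.
  - intros [n Hn]. destruct (stage_below n x Hn) as [a [Ha Hx]].
    exists a. split; [exact Ha|]. now exists n.
  - intros [a [Ha Hx]]. revert Hx. apply closure_subset, A_incr, Ha.
Qed.

End Closure.

Arguments closure {T} g A x.

(* A countable-valued relation can be coded into a single club function: [g]
   sends [x :: r] to the [length r]-th element of an enumeration of [h x]. *)
Lemma closing_function {T} (Z : T -> Prop) (z0 : T) (h : T -> T -> Prop) :
  Z z0 -> (forall x, enumerable (h x)) -> (forall x y, h x y -> Z y) ->
  exists g : list T -> T, (forall s, Z (g s)) /\
    forall Y, closed_under g Y -> Y z0 /\ forall x y, Y x -> h x y -> Y y.
Proof.
  intros Zz0 h_enum hZ.
  assert (Henum : forall x, exists e : nat -> T,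
            (forall n, e n = z0 \/ h x (e n)) /\ forall y, h x y -> exists n, e n = y).
  { intros x. destruct (h_enum x) as [e [He1 He2]].
    exists (fun n => match e n with Some y => y | None => z0 end). split.
    - intros n. destruct (e n) eqn:E; [right; eauto|now left].
    - intros y Hy. destruct (He2 y Hy) as [n Hn]. exists n. now rewrite Hn. }
  set (e := fun x => proj1_sig (constructive_indefinite_description _ (Henum x))).
  assert (He : forall x, (forall n, e x n = z0 \/ h x (e x n)) /\
                         forall y, h x y -> exists n, e x n = y).
  { intros x. exact (proj2_sig (constructive_indefinite_description _ (Henum x))). }
  exists (fun s => match s with [] => z0 | x :: r => e x (length r) end). split.
  - intros [|x r]; [exact Zz0|].
    destruct (proj1 (He x) (length r)) as [->|Hy]; eauto.
  - intros Y Hg. split; [exact (Hg [] (Forall_nil _))|].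
    intros x y Yx Hy. destruct (proj2 (He x) y Hy) as [n <-].
    specialize (Hg (x :: repeat x n)). simpl in Hg. rewrite repeat_length in Hg.
    apply Hg. constructor; [exact Yx|].
    apply Forall_forall. intros z Hz. apply repeat_spec in Hz. now subst.
Qed.

Lemma well_founded_minimal {T} (R : T -> T -> Prop) :
  well_founded R -> forall Q : T -> Prop,
  (exists x, Q x) -> exists x, Q x /\ forall y, Q y -> ~ R y x.
Proof.
  intros R_wf Q [x Qx]. apply NNPP; intros Hn. revert Qx.
  induction x as [x IH] using (well_founded_ind R_wf). intros Qx.
  apply Hn. exists x. split; [exact Qx|]. intros y Qy Ryx. exact (IH y Ryx Qy).
Qed.

Section Omega1.

Variables (W : Type) (lt : W -> W -> Prop).
Hypothesis HW : is_omega1 W lt.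

Lemma omega1_wf : well_founded lt.
Proof. exact (proj1 HW). Qed.

Lemma omega1_trans a b c : lt a b -> lt b c -> lt a c.
Proof. exact (proj1 (proj2 HW) a b c). Qed.

Lemma omega1_total a b : lt a b \/ a = b \/ lt b a.
Proof. exact (proj1 (proj2 (proj2 HW)) a b). Qed.

Lemma omega1_uncountable : ~ countable (fun _ : W => True).
Proof. exact (proj1 (proj2 (proj2 (proj2 HW)))). Qed.

Lemma omega1_segment_countable a : countable (fun b => lt b a).
Proof. exact (proj2 (proj2 (proj2 (proj2 HW))) a). Qed.

Lemma omega1_inhabited : inhabited W.
Proof.
  destruct (uncountable_inhabited _ omega1_uncountable) as [a _]. now constructor.
Qed.

Lemma omega1_unbounded a : exists b, lt a b.
Proof.
  apply NNPP; intros Hn. apply omega1_uncountable.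
  apply enumerable_countable.
  apply enumerable_subset with (A := fun b => b = a \/ lt b a).
  - intros b _. destruct (omega1_total a b) as [Hab|[<-|Hba]]; auto.
    exfalso. eauto.
  - apply enumerable_union; [apply enumerable_singleton|].
    apply countable_enumerable, omega1_segment_countable.
Qed.

Section OrderType.

Variables (U : Type) (P : U -> Prop) (r : U -> U -> Prop).
Hypotheses (r_wf : well_founded r)
  (r_total : forall u v, P u -> P v -> r u v \/ u = v \/ r v u)
  (r_segment_countable : forall u, P u -> countable (fun v => P v /\ r v u))
  (P_uncountable : ~ countable P).

Definition least_outside (R : U -> Prop) (u : U) : Prop :=
  P u /\ ~ R u /\ forall v, P v -> ~ R v -> ~ r v u.

Lemma exists_least_outside (R : U -> Prop) :
  countable (fun v => P v /\ R v) -> exists u, least_outside R u.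
Proof.
  intros HR.
  destruct (well_founded_minimal r r_wf (fun u => P u /\ ~ R u))
    as [u [[Pu Ru] Hmin]].
  - apply NNPP; intros Hn. apply P_uncountable.
    apply countable_subset with (B := fun v => P v /\ R v); [|exact HR].
    intros v Pv. split; [exact Pv|]. apply NNPP; eauto.
  - exists u. split; [exact Pu|split; [exact Ru|]].
    intros v Pv Rv. apply Hmin. now split.
Qed.

Lemma order_type_inhabited : inhabited U.
Proof. destruct (uncountable_inhabited P P_uncountable) as [u _]. now constructor. Qed.

Definition choose_next (a : W) (rec : forall b, lt b a -> U) : U :=
  epsilon order_type_inhabited
    (least_outside (fun v => exists b (Hb : lt b a), rec b Hb = v)).

(* Enumerates P increasingly along lt, each time taking the r-least unused element. *)
Definition enumeration : W -> U := Fix omega1_wf (fun _ => U) choose_next.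

Lemma enumeration_eq a : enumeration a = choose_next a (fun b _ => enumeration b).
Proof.
  unfold enumeration. apply (Fix_eq omega1_wf (fun _ => U) choose_next).
  intros x f1 f2 Hf. replace f2 with f1; [reflexivity|].
  apply functional_extensionality_dep; intros y.
  apply functional_extensionality_dep; intros p. apply Hf.
Qed.

Lemma enumeration_spec a :
  least_outside (fun v => exists b (_ : lt b a), enumeration b = v) (enumeration a).
Proof.
  rewrite enumeration_eq. unfold choose_next.
  apply epsilon_spec, exists_least_outside.
  apply enumerable_countable.
  apply enumerable_subset with (A := fun v => exists b, lt b a /\ v = enumeration b).
  - intros v [_ [b [Hb <-]]]. eauto.
  - apply enumerable_image, countable_enumerable, omega1_segment_countable.
Qed.

Lemma enumeration_in a : P (enumeration a).
Proof. apply enumeration_spec. Qed.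

Lemma enumeration_injective a b : enumeration a = enumeration b -> a = b.
Proof.
  intros E. destruct (omega1_total a b) as [Hab|[Hab|Hba]]; [|exact Hab|].
  - exfalso. apply (proj1 (proj2 (enumeration_spec b))). eauto.
  - exfalso. apply (proj1 (proj2 (enumeration_spec a))). eauto.
Qed.

Lemma enumeration_surjective u : P u -> exists a, enumeration a = u.
Proof.
  intros Pu. apply NNPP; intros Hn.
  assert (below_u : forall a, r (enumeration a) u).
  { intros a. destruct (enumeration_spec a) as (Pa & _ & Hleast).
    destruct (r_total _ _ Pa Pu) as [H|[H|H]]; [exact H|exfalso; eauto|].
    exfalso. apply (Hleast u Pu); [|exact H].
    intros [b [_ Hb]]. eauto. }
  apply omega1_uncountable.
  apply countable_injective_map with (B := fun v => P v /\ r v u) (h := enumeration).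
  - intros a _. split; [apply enumeration_in|apply below_u].
  - intros a b _ _. apply enumeration_injective.
  - exact (r_segment_countable u Pu).
Qed.

Lemma card_eq_W_of_well_order : card_eq_W W P.
Proof.
  exists (fun a => exist P (enumeration a) (enumeration_in a)). split.
  - intros a b E. injection E. apply enumeration_injective.
  - intros [u Pu]. destruct (enumeration_surjective u Pu) as [a Ha].
    exists a. subst u. f_equal. apply proof_irrelevance.
Qed.

End OrderType.

Variables (X : Type) (iota : W -> X).

(** * From SRP to a continuous chain *)

Definition segment (a : W) (x : X) : Prop := exists b, lt b a /\ x = iota b.

Lemma segment_increasing : increasing lt segment.
Proof.
  intros a b Hab x [c [Hc ->]]. exists c. split; [|reflexivity].
  exact (omega1_trans c a b Hc Hab).
Qed.

Lemma segment_continuous : continuous lt segment.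
Proof.
  intros l [_ Hl] x. split.
  - intros [b [Hb ->]]. destruct (Hl b Hb) as [c [Hbc Hcl]].
    exists c. split; [exact Hcl|]. now exists b.
  - intros [a [Hal Hx]]. exact (segment_increasing a l Hal x Hx).
Qed.

Lemma club_continuous_chain (Z : X -> Prop) (g : list X -> X) :
  (forall a, Z (iota a)) -> (forall s, Forall Z s -> Z (g s)) ->
  exists f : W -> (X -> Prop),
    (forall a, in_ctbl Z (f a) /\ closed_under g (f a)) /\
    increasing lt f /\ continuous lt f /\ (forall a, exists b, f b (iota a)).
Proof.
  intros HZ Hg. exists (fun a => closure g (segment a)).
  split; [|split; [|split]].
  - intros a. split; [split|].
    + apply enumerable_countable, enumerable_closure, enumerable_image.
      apply countable_enumerable, omega1_segment_countable.
    + intros x. apply closure_min; [|exact Hg]. intros y [b [_ ->]]. apply HZ.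
    + apply closure_closed.
  - apply closure_increasing, segment_increasing.
  - apply closure_continuous; [exact omega1_total|exact segment_increasing|].
    exact segment_continuous.
  - intros a. destruct (omega1_unbounded a) as [b Hb].
    exists b, 0. simpl. now exists a.
Qed.

(** * From a continuous chain to SRP *)

Hypothesis iota_injective : forall a b, iota a = iota b -> a = b.

Lemma exists_not_in_countable (Y : X -> Prop) : countable Y -> exists d, ~ Y (iota d).
Proof.
  intros HY. apply NNPP; intros Hn. apply omega1_uncountable.
  apply countable_injective_map with (B := Y) (h := iota); [|auto|exact HY].
  intros a _. apply NNPP; eauto.
Qed.

Section Chain.

Variable f : W -> X -> Prop.
Hypotheses (f_countable : forall a, countable (f a)) (f_increasing : increasing lt f)
  (f_continuous : continuous lt f) (f_cover : forall a, exists b, f b (iota a)).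

Definition chain_union (x : X) : Prop := exists a, f a x.

Definition rank (x : X) : W :=
  epsilon omega1_inhabited (fun a => f a x /\ forall b, f b x -> ~ lt b a).

Lemma rank_spec x : chain_union x -> f (rank x) x /\ forall b, f b x -> ~ lt b (rank x).
Proof.
  intros Hx. unfold rank.
  apply epsilon_spec, well_founded_minimal; [exact omega1_wf|exact Hx].
Qed.

Definition succ (a : W) : W := epsilon omega1_inhabited (lt a).

Lemma lt_succ a : lt a (succ a).
Proof. unfold succ. apply epsilon_spec, omega1_unbounded. Qed.

Definition next (x y : X) : Prop :=
  y = iota (rank x) \/
  exists a, x = iota a /\
    (f a y \/ y = iota (succ a) \/ exists b, lt b a /\ y = iota b).

Lemma next_enumerable x : enumerable (next x).
Proof.
  destruct (classic (exists a, x = iota a)) as [[a ->]|Hn].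
  - apply enumerable_subset with (A := fun y => y = iota (rank (iota a)) \/
       f a y \/ y = iota (succ a) \/ exists b, lt b a /\ y = iota b).
    + intros y [Hy|[a' [E Hy]]]; [now left|].
      apply iota_injective in E. subst a'. now right.
    + repeat apply enumerable_union; try apply enumerable_singleton.
      * apply countable_enumerable, f_countable.
      * apply enumerable_image, countable_enumerable, omega1_segment_countable.
  - apply enumerable_subset with (A := fun y => y = iota (rank x));
      [|apply enumerable_singleton].
    intros y [Hy|[a [E _]]]; [exact Hy|]. exfalso. eauto.
Qed.

Lemma next_chain_union x y : next x y -> chain_union y.
Proof.
  intros [->|[a [_ [Hy|[->|[b [_ ->]]]]]]]; [apply f_cover|now exists a|apply f_cover..].
Qed.

Lemma card_chain_union : card_eq_W W chain_union.
Proof.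
  assert (Hcode : forall a, exists k : X -> nat,
            forall u v, f a u -> f a v -> k u = k v -> u = v).
  { intros a. apply countable_injection_nat, f_countable. }
  set (code := fun a => proj1_sig (constructive_indefinite_description _ (Hcode a))).
  assert (code_inj : forall a u v, f a u -> f a v -> code a u = code a v -> u = v).
  { intros a. exact (proj2_sig (constructive_indefinite_description _ (Hcode a))). }
  set (key := fun u => (rank u, code (rank u) u)).
  apply card_eq_W_of_well_order with
    (r := fun u v => slexprod W nat lt Peano.lt (key u) (key v)).
  - apply wf_inverse_image, wf_slexprod; [exact omega1_wf|exact lt_wf].
  - intros u v Hu Hv. unfold key.
    destruct (omega1_total (rank u) (rank v)) as [E|[E|E]];
      [left; now apply left_slex| |right; right; now apply left_slex].
    rewrite <- E.
    destruct (Nat.lt_trichotomy (code (rank u) u) (code (rank u) v)) as [I|[I|I]];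
      [left; now apply right_slex| |right; right; now apply right_slex].
    right; left. apply (code_inj (rank u)); auto; [apply rank_spec, Hu|].
    rewrite E. apply rank_spec, Hv.
  - intros u Hu. apply countable_subset with (B := f (rank u)); [|apply f_countable].
    intros v [Hv Hvu]. unfold key in Hvu.
    inversion Hvu as [a b c d Hab|a c d Hcd]; subst.
    + exact (f_increasing _ _ Hab v (proj1 (rank_spec v Hv))).
    + exact (proj1 (rank_spec v Hv)).
  - intros Hc. apply omega1_uncountable.
    apply countable_injective_map with (B := chain_union) (h := iota); auto.
    intros a _. apply f_cover.
Qed.

Lemma closed_set_is_chain_member (Y : X -> Prop) :
  countable Y -> subset Y chain_union -> (exists x, Y x) ->
  (forall x y, Y x -> next x y -> Y y) -> exists d, Y = f d.
Proof.
  intros HY Y_union [x0 Yx0] Y_next.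
  destruct (well_founded_minimal lt omega1_wf _ (exists_not_in_countable Y HY))
    as [d [Yd d_least]].
  assert (below : forall b, lt b d -> Y (iota b)).
  { intros b Hb. apply NNPP; intros Hn. exact (d_least b Hn Hb). }
  assert (only_below : forall b, Y (iota b) -> lt b d).
  { intros b Yb. destruct (omega1_total b d) as [E|[<-|E]]; [exact E|contradiction|].
    exfalso. apply Yd, (Y_next _ _ Yb). right. exists b. eauto 6. }
  assert (d_limit : is_limit lt d).
  { split.
    - exists (rank x0). apply only_below, (Y_next x0); [exact Yx0|now left].
    - intros a Ha. exists (succ a). split; [apply lt_succ|].
      apply only_below, (Y_next (iota a)); [now apply below|]. right. eauto. }
  exists d. apply functional_extensionality; intros x.
  apply propositional_extensionality. rewrite (f_continuous d d_limit x). split.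
  - intros Yx. exists (rank x). split.
    + apply only_below, (Y_next x); [exact Yx|now left].
    + apply rank_spec, Y_union, Yx.
  - intros [a [Ha Hx]]. apply (Y_next (iota a)); [now apply below|]. right. eauto.
Qed.

Lemma chain_union_strongly_reflects (S : (X -> Prop) -> Prop) :
  (forall a, S (f a)) -> strongly_reflects S chain_union.
Proof.
  intros Sf. destruct omega1_inhabited as [w0].
  destruct (closing_function chain_union (iota w0) next)
    as [g [g_union g_closing]];
    [apply f_cover|exact next_enumerable|exact next_chain_union|].
  exists (fun Y => in_ctbl chain_union Y /\ closed_under g Y). split.
  - exists g. split; [auto|tauto].
  - intros Y [[HY Y_union] Yg]. split; [|split; assumption].
    destruct (g_closing Y Yg) as [Yw0 Y_next].
    destruct (closed_set_is_chain_member Y HY) as [d ->]; eauto.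
Qed.

End Chain.

End Omega1.

Arguments chain_union {W X} f x.

Theorem mainTheorem12
  (W : Type) (lt : W -> W -> Prop) (HW : is_omega1 W lt)
  (X : Type) (iota : W -> X) (Hiota : forall a b, iota a = iota b -> a = b) :
  SRP iota <->
  (forall S : (X -> Prop) -> Prop,
     (forall A, S A -> countable A) ->
     proj_stationary iota S ->
     exists f : W -> (X -> Prop),
       (forall a, S (f a)) /\ increasing lt f /\ continuous lt f /\
       (forall a, exists b, f b (iota a))).
Proof.
  split.
  - intros Hsrp S S_countable HS.
    destruct (Hsrp S S_countable HS) as (Z & HZ & _ & C & [g [Hg HC]] & HCS).
    destruct (club_continuous_chain W lt HW X iota Z g HZ Hg)
      as (f & Hf & f_incr & f_cont & f_cover).
    exists f. split; [|auto]. intros a. apply HCS, HC, Hf.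
  - intros Hchain S S_countable HS.
    destruct (Hchain S S_countable HS) as (f & Sf & f_incr & f_cont & f_cover).
    assert (f_countable : forall a, countable (f a)) by (intros a; apply S_countable, Sf).
    exists (chain_union f). split; [|split].
    + intros a. apply f_cover.
    + exact (card_chain_union W lt HW X iota Hiota f f_countable f_incr f_cover).
    + exact (chain_union_strongly_reflects W lt HW X iota Hiota f f_countable f_cont
               f_cover S Sf).
Qed.
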